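(* Let $(\mathbf{D},\mathbf{E})$ be a semi-dual pair and let $\mathbf{K}$ be a compact topological structure admitting a continuous embedding into some power of $\mathbf{D}$. Then: (a) every homomorphism from $\mathbf{K}^*$ into $\mathbf{E}$ is continuous; (b) $\mathbf{K}$ is reflexive with respect to $(\mathbf{D},\mathbf{E})$.
   Context: A structure is a set with constants, relations and (possibly partial) operations of a first-order language; homomorphisms preserve them; an embedding is an injective homomorphism $f$ with $R(f(x_0),\dots,f(x_{n-1}))\iff R(x_0,\dots,x_{n-1})$ for every relation $R$. For a finite structure $\mathbf{D}$, a structure is $\mathbf{D}$-separated if it embeds into some power of $\mathbf{D}$. A topological structure is a structure with a Hausdorff topology in which all relations and operations are continuous; finite structures carry the discrete topology and powers the product topology. For topological structures, $\hom(\mathbf{X},\mathbf{Y})$ denotes the set of continuous homomorphisms. Semi-dual pair: let $\mathcal L,\mathcal R$ be countable first-order languages, $\mathbf{D}$ a finite $\mathcal L$-model and $\mathbf{E}$ a finite $\mathcal R$-model with the same universe. $(\mathbf{D},\mathbf{E})$ is a semi-dual pair if for every finite $\mathbf{D}$-separated $\mathbf{X}$ with universe $X$: (S1) $\hom(\mathbf{X},\mathbf{D})$ is a substructure of $\mathbf{E}^X$; (S2) for every homomorphism $\phi$ from $\hom(\mathbf{X},\mathbf{D})$ (with the $\mathcal R$-structure induced from $\mathbf{E}^X$) into $\mathbf{E}$ there is $x\in X$ with $\phi(f)=f(x)$ for all $f\in\hom(\mathbf{X},\mathbf{D})$. For a topological structure $\mathbf{X}$ continuously embeddable into a power of $\mathbf{D}$,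 $\mathbf{X}^*$ is $\hom(\mathbf{X},\mathbf{D})$ with the $\mathcal R$-structure and product (pointwise) topology induced from $\mathbf{E}^{X}$ ($\mathbf{E}$ discrete), and $\mathbf{X}^{**}=\hom(\mathbf{X}^*,\mathbf{E})$ (continuous homomorphisms), viewed inside $\mathbf{D}^{\mathbf{X}^*}$. The evaluation map $e:\mathbf{X}\to\mathbf{X}^{**}$ is $e(x)(f)=f(x)$; $\mathbf{X}$ is reflexive with respect to $(\mathbf{D},\mathbf{E})$ if $e$ is onto. *)

From HB Require Import structures.
From mathcomp Require Import all_boot all_order all_algebra.
From mathcomp Require Import all_classical all_reals.
From mathcomp Require Import topology_structure separation_axioms compact
  function_spaces discrete_topology subspace_topology.
From Stdlib Require Import ClassicalEpsilon.

Set Implicit Arguments.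
Unset Strict Implicit.
Unset Printing Implicit Defensive.

Local Open Scope classical_set_scope.

Record language := Language {
  cst : countType;
  rel : countType;
  rar : rel -> nat;
  opr : countType;
  oar : opr -> nat }.

Record structure (L : language) (A : Type) := Structure {
  cval : cst L -> A;
  rval : forall r : rel L, ('I_(rar r) -> A) -> Prop;
  oval : forall o : opr L, ('I_(oar o) -> A) -> option A }.

Arguments cval {L A}.
Arguments rval {L A}.
Arguments oval {L A}.

Section Homs.
Variables (L : language) (A B : Type) (M : structure L A) (N : structure L B).

Definition is_hom (f : A -> B) : Prop :=
  [/\ forall c, f (cval M c) = cval N c,
      forall r (x : 'I_(rar r) -> A), rval M r x -> rval N r (f \o x)
    & forall o (x : 'I_(oar o) -> A) y,
        oval M o x = Some y -> oval N o (f \o x) = Some (f y)].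

Definition is_embedding (f : A -> B) : Prop :=
  [/\ is_hom f, injective f &
      forall r (x : 'I_(rar r) -> A), rval N r (f \o x) -> rval M r x].

End Homs.

(** Powers [M^I] (pointwise structure).  A partial operation is defined
    at a tuple iff it is defined in every coordinate. *)
Definition power_oval (L : language) (A I : Type) (M : structure L A)
  (o : opr L) (x : 'I_(oar o) -> (I -> A)) : option (I -> A) :=
  match excluded_middle_informative
          (forall i, isSome (oval M o (fun k => x k i))) with
  | left H => Some (fun i =>
      match oval M o (fun k => x k i) as u return isSome u -> A with
      | Some v => fun _ => v
      | None => fun F => False_rect A (notF F)
      end (H i))
  | right _ => None
  end.

Definition power (L : language) (A : Type) (M : structure L A) (I : Type)
  : structure L (I -> A) :=
  {| cval := fun c _ => cval M c;
     rval := fun r x => forall i, rval M r (fun k => x k i);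
     oval := fun o x => power_oval M x |}.

Definition is_substructure (L : language) (A : Type) (M : structure L A)
  (S : set A) : Prop :=
  (forall c, S (cval M c)) /\
  (forall o (x : 'I_(oar o) -> A) y,
      (forall k, S (x k)) -> oval M o x = Some y -> S y).

(** [phi] (restricted to [S]) is a homomorphism from the structure
    induced by [M] on [S] into [N].  (In the induced structure the
    relations are restricted, and an operation is defined at a tuple of
    [S] iff it is defined in [M] with value in [S].) *)
Definition is_hom_from_sub (L : language) (A B : Type) (M : structure L A)
  (S : set A) (N : structure L B) (phi : A -> B) : Prop :=
  [/\ forall c, S (cval M c) -> phi (cval M c) = cval N c,
      forall r (x : 'I_(rar r) -> A), (forall k, S (x k)) ->
        rval M r x -> rval N r (phi \o x)
    & forall o (x : 'I_(oar o) -> A) y, (forall k, S (x k)) -> S y ->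
        oval M o x = Some y -> oval N o (phi \o x) = Some (phi y)].

Definition homset (L : language) (A B : Type) (M : structure L A)
  (N : structure L B) : set (A -> B) := [set f | is_hom M N f].

Definition separated (L : language) (A U : Type) (D : structure L U)
  (M : structure L A) : Prop :=
  exists (I : Type) (e : A -> (I -> U)), is_embedding M (power D I) e.

Definition semi_dual_pair (L R : language) (U : finType)
  (D : structure L U) (E : structure R U) : Prop :=
  forall (X : finType) (MX : structure L X), separated D MX ->
    is_substructure (power E X) (homset MX D) /\
    (forall phi : (X -> U) -> U,
        is_hom_from_sub (power E X) (homset MX D) E phi ->
        exists x : X, forall f, homset MX D f -> phi f = f x).

Definition topological_structure (L : language) (T : topologicalType)
  (M : structure L T) : Prop :=
  [/\ hausdorff_space T,
      forall r, closed ([set x | rval M r x] : set {ptws 'I_(rar r) -> T})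
    & forall o (y0 : T),
        {within ([set x | oval M o x <> None] : set {ptws 'I_(oar o) -> T}),
          continuous (fun x : {ptws 'I_(oar o) -> T} =>
                         odflt y0 (oval M o x))}].

Notation discr U := (discrete_topology U).

Definition chom (L : language) (T : topologicalType) (U : finType)
  (M : structure L T) (D : structure L U) : set (T -> U) :=
  [set f | is_hom M D f /\ continuous (f : T -> discr U)].

Definition cont_embeddable (L : language) (T : topologicalType) (U : finType)
  (M : structure L T) (D : structure L U) : Prop :=
  exists (I : Type) (e : T -> (I -> U)),
    is_embedding M (power D I) e /\
    continuous (e : T -> {ptws I -> discr U}).

From mathcomp Require Import all_boot all_order all_algebra.
From mathcomp Require Import all_classical all_reals finmap.
From mathcomp Require Import topology_structure separation_axioms compact
  function_spaces discrete_topology subspace_topology.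
From Stdlib Require Import ClassicalEpsilon.

(** Let [phi] be a homomorphism from [K^*] into [E].  For finitely many
    [f_1, ..., f_n] in [K^*], the image of [K] under [(f_1, ..., f_n)] is a
    finite [D]-separated structure [X]; precomposition with [K -> X] turns
    [phi] into a homomorphism [X^* -> E], which semi-duality realises as the
    evaluation at a point of [X], i.e. at some [t] in [K].  So the sets
    [{t | f t = phi f}] have the finite intersection property, and by
    compactness the filter they generate has a cluster point [x]; as each [f]
    is locally constant, [phi f = f x] for all [f].  This is (b); (a) follows
    since evaluation at [x] is continuous for the pointwise topology. *)

Set Implicit Arguments.
Unset Strict Implicit.

Local Open Scope classical_set_scope.

Lemma power_ovalP (L : language) (A I : Type) (M : structure L A) o
    (x : 'I_(oar o) -> I -> A) (y : I -> A) :
  power_oval M x = Some y <-> forall i, oval M o (fun k => x k i) = Some (y i).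
Proof.
rewrite /power_oval; case: excluded_middle_informative => [defx|undefx].
- split=> [[<-] i|xy]; first by case: (oval M o (fun k => x k i)) (defx i).
  congr Some; apply: funext => i.
  by case: (oval M o (fun k => x k i)) (defx i) (xy i) => // v _ [].
- by split=> // xy; case: undefx => i; rewrite xy.
Qed.

Lemma hom_from_sub_precomp (R : language) (A B V : Type) (E : structure R V)
    (S : set (A -> V)) (S' : set (B -> V)) (p : A -> B) (phi : (A -> V) -> V) :
  (forall g, S' g -> S (g \o p)) ->
  is_hom_from_sub (power E A) S E phi ->
  is_hom_from_sub (power E B) S' E (fun g => phi (g \o p)).
Proof.
move=> pS [phi_cst phi_rel phi_op]; split.
- by move=> c /pS; exact: phi_cst.
- move=> r x Sx xr; apply: (phi_rel r (fun k => x k \o p)) => [k|t].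
    exact: pS.
  exact: xr.
- move=> o x y Sx Sy /power_ovalP xy.
  apply: (phi_op o (fun k => x k \o p)) => [k||]; [exact: pS|exact: pS|].
  by apply/power_ovalP => t; exact: xy.
Qed.

Section FiniteImage.
Variables (L : language) (U : finType) (D : structure L U).
Variables (A : Type) (K : structure L A) (I : finType) (F : I -> A -> U).

Definition image_tuple (t : A) : {ffun I -> U} := [ffun i => F i t].

Definition image_type := {v : {ffun I -> U} | `[< exists t, image_tuple t = v >]}.

Definition image_proj (t : A) : image_type :=
  exist _ (image_tuple t) (asboolT (ex_intro _ t erefl)).

Definition image_structure : structure L image_type := {|
  cval c := image_proj (cval K c);
  rval r x := rval (power D I) r (fun k => val (x k) : I -> U);
  oval o x := [pick y : image_type | `[< oval (power D I) o
      (fun k => val (x k) : I -> U) = Some (val y : I -> U) >] ] |}.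

Lemma image_coord_proj i : (fun v : image_type => val v i) \o image_proj = F i.
Proof. by apply: funext => t; rewrite /= ffunE. Qed.

Hypothesis homF : forall i, is_hom K D (F i).

Lemma hom_image_coord i : homset image_structure D (fun v => val v i).
Proof.
split=> [c|r x /(_ i)|o x y] //=; first by rewrite ffunE; case: (homF i).
by case: pickP => // y' /asboolP /power_ovalP /(_ i) xy' [<-].
Qed.

Lemma image_tuple_oval {o} {x : 'I_(oar o) -> A} {y} : oval K o x = Some y ->
  oval (power D I) o (fun k => image_tuple (x k) : I -> U)
    = Some (image_tuple y : I -> U).
Proof.
move=> xy; apply/power_ovalP => i; rewrite ffunE.
have [_ _ Fi_op] := homF i.
by rewrite -(Fi_op _ _ _ xy); congr oval; apply: funext => k; rewrite ffunE.
Qed.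

Lemma image_proj_oval {o} {x : 'I_(oar o) -> A} {y} : oval K o x = Some y ->
  oval image_structure o (image_proj \o x) = Some (image_proj y).
Proof.
move=> /image_tuple_oval /= xy /=.
case: pickP => [y' /asboolP /= | /(_ (image_proj y)) /=]; last by rewrite xy asboolT.
rewrite xy => -[/(congr1 finfun)]; rewrite !ffunK => yy'.
by congr Some; apply: val_inj.
Qed.

Lemma image_separated : separated D image_structure.
Proof.
exists I, (fun v : image_type => val v : I -> U); split; first split.
- move=> c; apply: funext => i /=; rewrite ffunE.
  by have [Fi_cst _ _] := homF i.
- by [].
- by move=> o x y /=; case: pickP => // y' /asboolP xy' [<-].
- by move=> v w /(congr1 finfun); rewrite !ffunK => vw; exact: val_inj.
- by [].
Qed.

Lemma hom_image_proj g : homset image_structure D g -> is_hom K D (g \o image_proj).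
Proof.
move=> [g_cst g_rel g_op]; split=> [c|r x xr|o x y xy]; first exact: g_cst.
- apply: (g_rel r (image_proj \o x)) => i /=.
  have [_ Fi_rel _] := homF i.
  by rewrite -(image_coord_proj i) in Fi_rel; exact: Fi_rel.
- exact: g_op (image_proj_oval xy).
Qed.

End FiniteImage.

Section ContinuousFiniteImage.
Variables (L : language) (U : finType) (D : structure L U).
Variables (T : topologicalType) (K : structure L T) (I : finType) (F : I -> T -> U).
Hypothesis chomF : forall i, chom K D (F i).

Lemma image_proj_locally_constant t :
  \forall u \near t, image_proj F u = image_proj F t.
Proof.
have : \forall u \near t, forall i, F i u = F i t.
  by apply: filter_forall => i; exact: (chomF i).2 t _ (discrete_set1 _).
apply: filterS => u Fut; apply: val_inj; apply/ffunP => i.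
by rewrite !ffunE.
Qed.

Lemma chom_image_proj g :
  homset (image_structure D K F) D g -> chom K D (g \o image_proj F).
Proof.
move=> gh; split; first by apply: hom_image_proj gh => i; exact: (chomF i).1.
move=> t B /nbhs_singleton Bgt.
by apply: filterS (image_proj_locally_constant t) => u /= ->.
Qed.

End ContinuousFiniteImage.

Section Duality.
Variables (L R : language) (U : finType) (D : structure L U) (E : structure R U).
Variables (T : topologicalType) (K : structure L T).
Hypothesis sd : semi_dual_pair D E.
Variable phi : (T -> U) -> U.
Hypothesis phi_hom : is_hom_from_sub (power E T) (chom K D) E phi.

Lemma semi_dual_finite_eval (I : finType) (F : I -> T -> U) :
  (forall i, chom K D (F i)) -> exists t, forall i, phi (F i) = F i t.
Proof.
move=> chomF.
have homF i : is_hom K D (F i) by exact: (chomF i).1.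
have [_ eval_point] := sd (image_separated homF).
have := hom_from_sub_precomp (chom_image_proj chomF) phi_hom.
move=> /eval_point [[v image_v] phi_eval]; have /asboolP [t tv] := image_v.
exists t => i; have := phi_eval _ (hom_image_coord homF i).
by rewrite image_coord_proj /= -tv ffunE.
Qed.

Lemma compact_semi_dual_eval : compact [set: T] ->
  exists x, forall f, chom K D f -> phi f = f x.
Proof.
move=> cpt; pose agree f := f @^-1` [set phi f].
have agree_finI : finI (chom K D) agree.
  move=> Fs Fs_chom.
  have [t phi_t] := semi_dual_finite_eval (F := fun f : Fs => val f)
    (fun f => set_mem (Fs_chom _ (valP f))).
  by exists t => f Fs_f; rewrite /agree /= (phi_t (FSetSub Fs_f)).
have agree_filter := finI_filter agree_finI.
have [x [_ x_cluster]] := cpt _ agree_filter filterT.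
exists x => f chom_f.
have f_locally_const := chom_f.2 x _ (discrete_set1 (f x : discr U)).
have agree_near : filter_from (finI_from (chom K D) agree) id (agree f).
  by exists (agree f) => //; exact: finI_from1.
have [t [ft_phi ft_fx]] := x_cluster _ _ agree_near f_locally_const.
by rewrite -ft_fx ft_phi.
Qed.

End Duality.

Unset Implicit Arguments.

Theorem mainTheorem1 (L R : language) (U : finType)
    (D : structure L U) (E : structure R U)
    (T : topologicalType) (K : structure L T) :
  semi_dual_pair D E ->
  topological_structure K ->
  compact [set: T] ->
  cont_embeddable K D ->
  (* (a) every homomorphism K^* -> E is continuous *)
  (forall phi : (T -> U) -> U,
      is_hom_from_sub (power E T) (chom K D) E phi ->
      {within (chom K D : set {ptws T -> discr U}),
        continuous (phi : {ptws T -> discr U} -> discr U)}) /\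
  (* (b) K is reflexive: the evaluation map onto K^** *)
  (forall phi : (T -> U) -> U,
      is_hom_from_sub (power E T) (chom K D) E phi ->
      {within (chom K D : set {ptws T -> discr U}),
        continuous (phi : {ptws T -> discr U} -> discr U)} ->
      exists x : T, forall f, chom K D f -> phi f = f x).
Proof.
move=> sd _ cpt _.
split=> phi phi_hom; last by move=> _; exact: (compact_semi_dual_eval sd phi_hom cpt).
have [x phi_x] := compact_semi_dual_eval sd phi_hom cpt.
apply: (@subspace_eq_continuous _ _ _ (fun f : {ptws T -> discr U} => f x)).
  by move=> f; rewrite in_setE => /phi_x.
by apply: continuous_subspaceT; exact: proj_continuous.
Qed.
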